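(* Let $\mathfrak v$ be an exact colinked chain with finite cosupport. Then the subset $\mathbb{LP}(\mathfrak v)^*\subseteq\mathbb{LP}(\mathfrak v)$ parameterizing exact subrepresentations is open and dense in $\mathbb{LP}(\mathfrak v)$.
   Context: Let $k$ be a field. $\mathcal Z$ is the quiver with vertex set $\mathbb Z$ and arrows $\alpha^i\colon i\to i+1$, $\alpha_i\colon i+1\to i$ ($i\in\mathbb Z$). A representation $\mathfrak{v}=(V_i,v_i,v^i)$ has finite-dimensional $k$-spaces $V_i$ and maps $v^i\colon V_i\to V_{i+1}$, $v_i\colon V_{i+1}\to V_i$; compositions $v^i_j$ are $v^{j-1}\circ\cdots\circ v^i$ ($j>i$), $v_j\circ\cdots\circ v_{i-1}$ ($j<i$), identity ($j=i$). A colinked chain satisfies $v_iv^i=0$, $v^iv_i=0$ and $\mathrm{Im}(v_i)+\mathrm{Im}(v^{i-1})=V_i$ for all $i$. A representation is exact if $\ker(v^i)=\mathrm{Im}(v_i)$ and $\ker(v_i)=\mathrm{Im}(v^i)$ for all $i$. A cosupport is $H\subseteq\mathbb Z$ such that for each $i$ there is $j\in H$ with $v^i_j$ injective. $\mathbb{LP}(\mathfrak{v})$ is the set of subrepresentations $\mathfrak w=(W_i)$ (with the restricted maps) with every $W_i\subseteq V_i$ one-dimensional, $v^i(W_i)\subseteq W_{i+1}$, $v_i(W_{i+1})\subseteq W_i$, given the scheme structure of the closed subscheme of $\prod_{i\in H}\mathbb P(V_i)$, for any finite interval cosupport $H$, defined by $v^i_j(x_i)\wedge x_j=0$ for $i,j\in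 H$. *)

From HB Require Import structures.
From mathcomp Require Import all_boot all_order all_algebra.
Set Implicit Arguments. Unset Strict Implicit. Unset Printing Implicit Defensive.
Import Order.TTheory GRing.Theory Num.Theory.
Local Open Scope ring_scope.

(* A representation of the quiver Z over a field k, with row-vector convention:
   V_i = 'rV[k]_(d i), v^i(x) = x *m up i, v_i(y) = y *m down i. *)

Section Rep.
Variables (k : fieldType) (d : int -> nat).
Variables (up : forall i : int, 'M[k]_(d i, d (i + 1)))
          (down : forall i : int, 'M[k]_(d (i + 1), d i)).

Inductive upR (i : int) (x : 'rV[k]_(d i)) : forall j : int, 'rV[k]_(d j) -> Prop :=
| upR0 : upR x x
| upRS j (y : 'rV[k]_(d j)) : upR x y -> upR x (y *m up j).

Inductive downR (i : int) (x : 'rV[k]_(d i)) : forall j : int, 'rV[k]_(d j) -> Prop :=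
| downR0 : downR x x
| downRS j (y : 'rV[k]_(d (j + 1))) : downR x y -> downR x (y *m down j).

(* graph of v^i_j (identity for j = i) *)
Definition compR (i : int) (x : 'rV[k]_(d i)) (j : int) (y : 'rV[k]_(d j)) : Prop :=
  upR x y \/ downR x y.

Definition comp_injective (i j : int) : Prop :=
  forall (x x' : 'rV[k]_(d i)) (y : 'rV[k]_(d j)), compR x y -> compR x' y -> x = x'.

(* colinked chain; the spanning condition Im(v_i) + Im(v^{i-1}) = V_i is
   written at index i+1 (i ranging over all of Z) to avoid type casts. *)
Definition colinked : Prop :=
  forall i : int,
    up i *m down i = 0 /\ down i *m up i = 0 /\
    (1%:M <= down (i + 1)%R + up i)%MS.

Definition exact_rep : Prop :=
  forall i : int, (kermx (up i) == down i)%MS /\ (kermx (down i) == up i)%MS.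

Definition cosupport (H : pred int) : Prop :=
  forall i : int, exists j : int, H j /\ comp_injective i j.

Variables (K : fieldType) (f : {rmorphism k -> K}).
Definition upK (i : int) : 'M[K]_(d i, d (i + 1)) := map_mx f (up i).
Definition downK (i : int) : 'M[K]_(d (i + 1), d i) := map_mx f (down i).

Definition fam := forall i : int, 'rV[K]_(d i).

(* K-points of LP(v): families of lines W_i = <w i> in V_i (x) K forming a
   subrepresentation *)
Definition lp_point (w : fam) : Prop :=
  forall i : int, w i != 0 /\ (w i *m upK i <= w (i + 1)%R)%MS /\
                  (w (i + 1)%R *m downK i <= w i)%MS.

(* the subrepresentation (W_i) with restricted maps is exact:
   ker(w^i) = Im(w_i) in W_i and ker(w_i) = Im(w^i) in W_{i+1} *)
Definition exact_sub (w : fam) : Prop :=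
  forall i : int,
    ((w i :&: kermx (upK i)) == w (i + 1)%R *m downK i)%MS /\
    ((w (i + 1)%R :&: kermx (downK i)) == w i *m upK i)%MS.

(* Zariski topology on prod_{i in H} P(V_i (x) K), H = [a, a + n] *)
Variables (a : int) (n : nat).
Definition inH (i : int) : bool := (a <= i) && (i <= a + n%:Z).

Inductive polyfun : (fam -> K) -> Prop :=
| pf_const (c : K) : polyfun (fun _ => c)
| pf_coord (i : int) (r : 'I_(d i)) : inH i -> polyfun (fun x => x i 0 r)
| pf_add p q : polyfun p -> polyfun q -> polyfun (fun x => p x + q x)
| pf_mul p q : polyfun p -> polyfun q -> polyfun (fun x => p x * q x).

Definition multihomogeneous (p : fam -> K) : Prop :=
  exists e : int -> nat, forall (lam : int -> K) (x : fam),
    (forall i, lam i != 0) ->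
    p (fun i => lam i *: x i) =
      (\prod_(t < n.+1) lam (a + (t : nat)%:Z) ^+ e (a + (t : nat)%:Z)) * p x.

(* Zariski closed subsets of the product of projective spaces, as sets of
   representative families *)
Definition zclosed (Z : fam -> Prop) : Prop :=
  exists S : (fam -> K) -> Prop,
    (forall p, S p -> polyfun p /\ multihomogeneous p) /\
    (forall x, Z x <-> (forall p, S p -> p x = 0)).

Definition LPstar_open : Prop :=
  exists Z, zclosed Z /\ forall w, lp_point w -> (exact_sub w <-> ~ Z w).

Definition LPstar_dense : Prop :=
  forall Z, zclosed Z ->
    (forall w, lp_point w -> exact_sub w -> Z w) ->
    forall w, lp_point w -> Z w.

End Rep.

From HB Require Import structures.
From mathcomp Require Import all_boot all_order all_algebra.
From mathcomp Require Import zify.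
From Stdlib Require Import Classical FunctionalExtensionality.
Import Order.TTheory GRing.Theory Num.Theory.
Local Open Scope ring_scope.
Set Implicit Arguments. Unset Strict Implicit. Unset Printing Implicit Defensive.

(* Call [i] a defect of a point [w] of LP(v) when [v^i w_i = 0] and [v_i w_(i+1) = 0].
   As [v_i v^i = v^i v_i = 0], a subrepresentation by lines is exact iff it has no
   defect.  Defects are cut out by linear equations and, by the cosupport condition,
   can only occur inside the window [a, a + n), so LP(v)^* is open.  For density, a
   defect at [i] is removed by moving [w] along a line [w + t u], [t <> 0]: [u_i]
   lifts [w_(i+1)] through [v^i], and downwards each [u_j] lifts [c_j u_(j+1)], where
   [v^j w_j = c_j w_(j+1)], inside [Im v^(j-1)]; such lifts exist because the chain
   is exact and [V_j = Im v_j + Im v^(j-1)].  The moved points have strictly fewer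
   defects, and a Zariski closed set containing [w + t u] for all [t <> 0] contains
   [w], since a polynomial in [t] vanishing on the infinite set K^* vanishes at 0. *)

Lemma int_ind_down (P : int -> Prop) (m : int) :
  (forall j, m <= j -> P j) -> (forall j, j < m -> P (j + 1) -> P j) ->
  forall j, P j.
Proof.
move=> Pge Pstep j; have [N] := ubnP (absz (m - j)).
elim: N j => // N IH j ltN; have [mj|jm] := leP m j; first exact: Pge.
by apply: Pstep => //; apply: IH; lia.
Qed.

Section IntRecursion.
Variable T : int -> Type.

Section RecDown.
Variables (i : int) (h : forall j, T j) (step : forall j, T (j + 1) -> T j).

Fixpoint rec_down_iter (N : nat) : forall j, T j :=
  if N is N'.+1 then fun j =>
    if j == i - N%:Z then step (rec_down_iter N' (j + 1)) else rec_down_iter N' j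
  else h.

Definition rec_down (j : int) : T j := rec_down_iter (absz (i - j)) j.

Lemma rec_down_iter_ge N j : i <= j -> rec_down_iter N j = h j.
Proof.
elim: N => //= N IH ij; case: eqP => [|_]; last exact: IH.
by move=> ji; exfalso; lia.
Qed.

Lemma rec_down_ge j : i <= j -> rec_down j = h j.
Proof. exact: rec_down_iter_ge. Qed.

Lemma rec_down_lt j : j < i -> rec_down j = step (rec_down (j + 1)).
Proof.
move=> ji; rewrite /rec_down.
have -> : absz (i - j) = (absz (i - (j + 1))%R).+1 by lia.
by rewrite /= ifT //; apply/eqP; lia.
Qed.

End RecDown.

(* [j - 1 + 1] is not convertible to [j], hence the cast. *)
Definition unshift (g : forall l, T (l + 1)) (j : int) : T j :=
  ecast m (T m) (subrK 1 j) (g (j - 1)).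

Lemma unshiftE g l : unshift g (l + 1) = g l.
Proof.
rewrite /unshift; move: (subrK 1 (l + 1)); rewrite (addrK 1 l) => e.
by rewrite eq_axiomK.
Qed.

End IntRecursion.

Section Lines.
Variable F : fieldType.

Lemma rV_eqmx n (x y : 'rV[F]_n) : x != 0 -> y != 0 -> (x <= y)%MS -> (x == y)%MS.
Proof.
move=> x0 y0 xy; rewrite xy /=.
by have [_ <-] := mxrank_leqif_sup xy; rewrite !rank_rV x0 y0.
Qed.

Lemma capmx_rV_eq0 n m (x : 'rV[F]_n) (Y : 'M_(m, n)) :
  ~~ (x <= Y)%MS -> (x :&: Y)%MS = 0.
Proof.
move=> xY; apply/eqP; rewrite -mxrank_eq0 -leqn0 -ltnS.
apply: leq_trans (rank_leq_row x).
by rewrite (ltn_leqif (mxrank_leqif_sup (capmxSl x Y))) sub_capmx submx_refl.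
Qed.

Lemma line_pair_exact n1 n2 (x : 'rV[F]_n1) (y : 'rV[F]_n2) A B :
  A *m B = 0 -> y != 0 -> x *m A != 0 -> (x *m A <= y)%MS ->
  ((x :&: kermx A) == y *m B)%MS /\ ((y :&: kermx B) == x *m A)%MS.
Proof.
move=> AB0 y0 xA0 xAy; have /andP[_ yxA] := rV_eqmx xA0 y0 xAy.
have yB0 : y *m B = 0.
  by have /sub_rVP[c ->] := yxA; rewrite -scalemxAl -mulmxA AB0 mulmx0 scaler0.
split; first by rewrite yB0 capmx_rV_eq0 ?sub_kermx // /eqmx !sub0mx.
have /capmx_idPl yK : (y <= kermx B)%MS by rewrite sub_kermx yB0.
by rewrite /eqmx !yK yxA.
Qed.
End Lines.

Section Zariski.
Variables (d : int -> nat) (K : fieldType) (a : int) (n : nat).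
Local Notation fam := (fam d K).

Lemma polyfun_ext (p q : fam -> K) : p =1 q -> polyfun a n p -> polyfun a n q.
Proof. by move/functional_extensionality->. Qed.

Lemma polyfun_sum N (P : 'I_N -> fam -> K) : (forall r, polyfun a n (P r)) ->
  polyfun a n (fun x => \sum_(r < N) P r x).
Proof.
elim: N P => [|N IH] P polyP.
  by apply: polyfun_ext (pf_const _ _ _ 0) => x; rewrite big_ord0.
apply: polyfun_ext (pf_add (IH _ (fun r => polyP _)) (polyP ord_max)) => x.
by rewrite big_ord_recr.
Qed.

Lemma polyfun_mulmx l m (M : 'M[K]_(d l, m)) c : inH a n l ->
  polyfun a n (fun x : fam => (x l *m M) 0 c).
Proof.
move=> Hl; pose P r (x : fam) := x l 0 r * M r c.
have polyP r : polyfun a n (P r) by apply: pf_mul (pf_coord K r Hl) (pf_const d a n _).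
by apply: polyfun_ext (polyfun_sum polyP) => x; rewrite mxE.
Qed.

Lemma multihomogeneous_mulmx l m (M : 'M[K]_(d l, m)) c : inH a n l ->
  multihomogeneous a n (fun x : fam => (x l *m M) 0 c).
Proof.
move=> /andP[al la]; have [t0 lE] : exists t0 : nat, l = a + t0%:Z.
  by exists (absz (l - a)%R); lia.
have t0n : (t0 < n.+1)%N by lia.
exists (fun j => (j == l : nat)) => lam x _; rewrite -scalemxAl mxE; congr (_ * _).
rewrite (bigD1 (Ordinal t0n)) //= lE eqxx expr1 big1 ?mulr1 // => t.
by rewrite (inj_eq (addrI a)) eqz_nat -val_eqE => /negPf->.
Qed.

Lemma zclosed_ext (Z1 Z2 : fam -> Prop) : (forall x, Z1 x <-> Z2 x) ->
  zclosed a n Z1 -> zclosed a n Z2.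
Proof. by move=> Z12 [S [HS HZ]]; exists S; split=> // x; rewrite -Z12. Qed.

Lemma zclosed0 : zclosed a n (fun _ : fam => False).
Proof.
exists (fun p => p = fun _ => 1); split=> [p -> | x].
  split; first exact: pf_const.
  by exists (fun _ => 0%N) => lam x _; rewrite big1 ?mul1r // => t _; rewrite expr0.
by split=> // /(_ _ erefl) /eqP; rewrite oner_eq0.
Qed.

Lemma zclosedI (Z1 Z2 : fam -> Prop) : zclosed a n Z1 -> zclosed a n Z2 ->
  zclosed a n (fun x => Z1 x /\ Z2 x).
Proof.
move=> [S1 [HS1 HZ1]] [S2 [HS2 HZ2]].
exists (fun p => S1 p \/ S2 p); split=> [p [/HS1 | /HS2] // | x].
rewrite HZ1 HZ2; split=> [[Z1x Z2x] p [/Z1x | /Z2x] // | Zx].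
by split=> p Sp; apply: Zx; [left | right].
Qed.

(* The union is cut out by the pairwise products of the defining polynomials. *)
Lemma zclosedU (Z1 Z2 : fam -> Prop) : zclosed a n Z1 -> zclosed a n Z2 ->
  zclosed a n (fun x => Z1 x \/ Z2 x).
Proof.
move=> [S1 [HS1 HZ1]] [S2 [HS2 HZ2]].
exists (fun p => exists2 p1, S1 p1 & exists2 p2, S2 p2 & p = fun x => p1 x * p2 x).
split=> [_ [p1 /HS1[pf1 [e1 h1]] [p2 /HS2[pf2 [e2 h2]] ->]] | x].
  split; first exact: pf_mul.
  exists (fun j => (e1 j + e2 j)%N) => lam x lam0.
  rewrite h1 // h2 // mulrACA -big_split /=.
  by congr (_ * _); apply: eq_bigr => t _; rewrite exprD.
split=> [[/HZ1 Z1x | /HZ2 Z2x] _ [p1 S1p1 [p2 S2p2 ->]] | Zx].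
- by rewrite (Z1x p1) ?mul0r.
- by rewrite (Z2x p2) ?mulr0.
have [Z1x | nZ1x] := classic (Z1 x); [by left | right; apply/HZ2 => p2 S2p2].
have [p1 [S1p1 p1x]] : exists p1, S1 p1 /\ p1 x <> 0.
  apply: NNPP => nex; apply/nZ1x/HZ1 => p1 S1p1.
  by apply: NNPP => p1x; apply: nex; exists p1.
have /eqP := Zx _ (ex_intro2 _ _ p1 S1p1 (ex_intro2 _ _ p2 S2p2 erefl)).
by rewrite mulf_eq0 => /orP[/eqP // | /eqP].
Qed.

Lemma zclosed_bigU N (Z : nat -> fam -> Prop) :
  (forall m, (m < N)%N -> zclosed a n (Z m)) ->
  zclosed a n (fun x => exists2 m, (m < N)%N & Z m x).
Proof.
elim: N => [|N IH] ZN.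
  by apply: zclosed_ext zclosed0 => x; split=> // [[]].
apply: zclosed_ext (zclosedU (IH (fun m mN => ZN m (ltnW mN))) (ZN N (ltnSn N))) => x.
split=> [[[m mN Zmx] | ZNx] | [m]]; first by exists m => //; apply: ltnW.
  by exists N.
by rewrite ltnS leq_eqVlt => /orP[/eqP-> | mN Zmx]; [right | left; exists m].
Qed.

Lemma zclosed_mulmx_eq0 l m (M : 'M[K]_(d l, m)) : inH a n l ->
  zclosed a n (fun x : fam => x l *m M = 0).
Proof.
move=> Hl; exists (fun p => exists c, p = fun x : fam => (x l *m M) 0 c).
split=> [_ [c ->] | x].
  by split; [apply: polyfun_mulmx | apply: multihomogeneous_mulmx].
split=> [xM0 _ [c ->] | xM0]; first by rewrite xM0 mxE.
by apply/rowP => c; rewrite (xM0 (fun x : fam => (x l *m M) 0 c)) ?mxE //; exists c.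
Qed.

Lemma polyfun_line (p : fam -> K) (w u : fam) : polyfun a n p ->
  exists q : {poly K}, forall t, p (fun j => w j + t *: u j) = q.[t].
Proof.
elim=> [c | i r _ | p1 p2 _ [q1 pq1] _ [q2 pq2] | p1 p2 _ [q1 pq1] _ [q2 pq2]].
- by exists c%:P => t; rewrite hornerC.
- by exists ((w i 0 r)%:P + 'X * (u i 0 r)%:P) => t; rewrite !mxE !hornerE.
- by exists (q1 + q2) => t; rewrite hornerD pq1 pq2.
- by exists (q1 * q2) => t; rewrite hornerM pq1 pq2.
Qed.

End Zariski.

(* ['X * q] has a non-root, which cannot be [0]. *)
Lemma horner0_punctured (K : closedFieldType) (q : {poly K}) :
  (forall t, t != 0 -> q.[t] = 0) -> q.[0] = 0.
Proof.
move=> q_punct; apply/eqP; apply: contraT => q0_neq0.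
have /closed_nonrootP[t] : 'X * q != 0.
  by rewrite mulf_neq0 ?polyX_eq0 //; apply: contraNneq q0_neq0 => ->; rewrite horner0.
rewrite /root hornerM hornerX; have [-> | t0] := eqVneq t 0; first by rewrite mul0r eqxx.
by rewrite q_punct ?mulr0 ?eqxx.
Qed.

Lemma zclosed_line d (K : closedFieldType) a n (Z : fam d K -> Prop) (w u : fam d K) :
  zclosed a n Z -> (forall t, t != 0 -> Z (fun j => w j + t *: u j)) -> Z w.
Proof.
move=> [S [HS HZ]] Zline; apply/HZ => p Sp.
have [q pq] := polyfun_line w u (HS p Sp).1.
have q0 : q.[0] = 0.
  by apply: horner0_punctured => t t0; rewrite -pq; apply: (proj1 (HZ _) (Zline t t0)).
rewrite -q0 -pq; congr p; apply: functional_extensionality_dep => j.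
by rewrite scale0r addr0.
Qed.

Section Representation.
Variables (k : fieldType) (d : int -> nat).
Variables (up : forall i : int, 'M[k]_(d i, d (i + 1)))
          (down : forall i : int, 'M[k]_(d (i + 1), d i)).
Hypotheses (colinked_v : colinked up down) (exact_v : exact_rep up down).
Variables (K : fieldType) (f : {rmorphism k -> K}).
Local Notation U := (upK up f).
Local Notation D := (downK down f).

Lemma mulUD i : U i *m D i = 0.
Proof. by rewrite -map_mxM (colinked_v i).1 map_mx0. Qed.

Lemma mulDU i : D i *m U i = 0.
Proof. by rewrite -map_mxM (colinked_v i).2.1 map_mx0. Qed.

Lemma addsDU i : (1%:M <= D (i + 1) + U i)%MS.
Proof. by rewrite -(map_mx1 f) -map_addsmx map_submx (colinked_v i).2.2. Qed.

Lemma kermxD i : (kermx (D i) <= U i)%MS.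
Proof. by rewrite -map_kermx map_submx; case/andP: (exact_v i).2. Qed.

(* A lift through [U (l + 1)] inside [Im (U l)]; indices are shifted by one so that
   [D l] applies to it without a cast. *)
Definition liftU l (z : 'rV[K]_(d (l + 1 + 1))) : 'rV[K]_(d (l + 1)) :=
  rsubmx (z *m pinvmx (U (l + 1)) *m pinvmx (col_mx (D (l + 1)) (U l))) *m U l.

Lemma liftU_D l (z : 'rV[K]_(d (l + 1 + 1))) : liftU z *m D l = 0.
Proof. by rewrite -mulmxA mulUD mulmx0. Qed.

Lemma liftU_U l (z : 'rV[K]_(d (l + 1 + 1))) :
  z *m D (l + 1) = 0 -> liftU z *m U (l + 1) = z.
Proof.
move=> zD0; set y := z *m pinvmx (U (l + 1)).
have yU : y *m U (l + 1) = z.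
  by rewrite mulmxKpV // (submx_trans _ (kermxD _)) ?sub_kermx ?zD0.
have /mulmxKpV : (y <= col_mx (D (l + 1)) (U l))%MS.
  by rewrite -addsmxE (submx_trans (submx1 y) (addsDU l)).
rewrite -[_ *m pinvmx _]hsubmxK mul_row_col => yE.
by rewrite -[RHS]yU -yE mulmxDl -mulmxA mulDU mulmx0 add0r.
Qed.

Definition defect (w : fam d K) (i : int) : bool :=
  (w i *m U i == 0) && (w (i + 1) *m D i == 0).

Lemma exact_subE w : lp_point up down f w ->
  exact_sub up down f w <-> forall i, ~~ defect w i.
Proof.
move=> lp_w; split=> [ex_w i | nodef i].
  apply/negP => /andP[/eqP wU0 /eqP wD0]; have [/andP[+ _] _] := ex_w i.
  have /capmx_idPl-> : (w i <= kermx (U i))%MS by rewrite sub_kermx wU0.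
  by rewrite wD0 => /submx0null w_eq0; have [] := lp_w i; rewrite w_eq0 eqxx.
have [w0 [wUw wDw]] := lp_w i; have [w1 _] := lp_w (i + 1).
have [wU0 | wU0] := eqVneq (w i *m U i) 0; last first.
  exact: line_pair_exact (mulUD i) w1 wU0 wUw.
have wD0 : w (i + 1) *m D i != 0 by move: (nodef i); rewrite /defect wU0 eqxx.
by have [] := line_pair_exact (mulDU i) w0 wD0 wDw.
Qed.

Section Deformation.
Variables (w : fam d K) (i : int).
Hypotheses (lp_w : lp_point up down f w) (def_w : defect w (i + 1)).

Lemma up_coef_ex l : exists c, w l *m U l == c *: w (l + 1).
Proof. by have [_ [/sub_rVP[c ->] _]] := lp_w l; exists c. Qed.

Definition up_coef l : K := xchoose (up_coef_ex l).

Lemma up_coefP l : w l *m U l = up_coef l *: w (l + 1).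
Proof. exact/eqP/(xchooseP (up_coef_ex l)). Qed.

Lemma up_coef_neq0 l : up_coef l != 0 -> w (l + 1) *m D l = 0.
Proof.
move=> c0; rewrite -[w _](scalerK c0) -up_coefP -scalemxAl -mulmxA mulUD.
by rewrite mulmx0 scaler0.
Qed.

Definition deform_dirS : forall l, 'rV[K]_(d (l + 1)) :=
  rec_down i (fun l => if l == i then liftU (w (l + 1 + 1)) else 0)
    (fun l z => up_coef (l + 1) *: liftU z).

Lemma deform_dirS_gt l : i < l -> deform_dirS l = 0.
Proof. by move=> il; rewrite /deform_dirS rec_down_ge ?ltW // ifN // gt_eqF. Qed.

Lemma deform_dirS_D l : deform_dirS l *m D l = 0.
Proof.
rewrite /deform_dirS; have [il | li] := leP i l; last first.
  by rewrite rec_down_lt // -scalemxAl liftU_D scaler0.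
by rewrite rec_down_ge //; case: eqP => _; rewrite ?liftU_D ?mul0mx.
Qed.

Lemma deform_dirS_U l : l != i ->
  deform_dirS l *m U (l + 1) = up_coef (l + 1) *: deform_dirS (l + 1).
Proof.
rewrite neq_lt => /orP[li | il]; last first.
  by rewrite !deform_dirS_gt ?mul0mx ?scaler0 //; lia.
by rewrite {1}/deform_dirS rec_down_lt // -scalemxAl liftU_U // deform_dirS_D.
Qed.

Lemma deform_dirS_iU : deform_dirS i *m U (i + 1) = w (i + 1 + 1).
Proof.
by rewrite /deform_dirS rec_down_ge // eqxx liftU_U //; case/andP: def_w => _ /eqP.
Qed.

Lemma deform_dirS_coef0 l : l != i -> up_coef (l + 1) = 0 -> deform_dirS l = 0.
Proof.
rewrite neq_lt => /orP[li | il] c0; last exact: deform_dirS_gt.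
by rewrite /deform_dirS rec_down_lt // c0 scale0r.
Qed.

Definition deform_dir : fam d K := unshift (T := fun j => 'rV_(d j)) deform_dirS.

Section Line.
Variable t : K.
Hypothesis t_neq0 : t != 0.

Definition deform_pt : fam d K := fun j => w j + t *: deform_dir j.

Lemma deform_ptE l : deform_pt (l + 1) = w (l + 1) + t *: deform_dirS l.
Proof. by rewrite /deform_pt /deform_dir unshiftE. Qed.

Lemma deform_pt_gt l : i < l -> deform_pt (l + 1) = w (l + 1).
Proof. by move=> il; rewrite deform_ptE deform_dirS_gt // scaler0 addr0. Qed.

Lemma deform_pt_coef0 l : l != i -> up_coef (l + 1) = 0 ->
  deform_pt (l + 1) = w (l + 1).
Proof. by move=> li c0; rewrite deform_ptE deform_dirS_coef0 // scaler0 addr0. Qed.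

Lemma deform_pt_U l : l != i ->
  deform_pt (l + 1) *m U (l + 1) = up_coef (l + 1) *: deform_pt (l + 1 + 1).
Proof.
move=> li; rewrite !deform_ptE mulmxDl up_coefP -scalemxAl deform_dirS_U //.
by rewrite scalerDr !scalerA mulrC.
Qed.

Lemma deform_pt_iU : deform_pt (i + 1) *m U (i + 1) = t *: w (i + 1 + 1).
Proof.
rewrite deform_ptE mulmxDl -scalemxAl deform_dirS_iU.
by case/andP: def_w => /eqP-> _; rewrite add0r.
Qed.

Lemma deform_pt_D l :
  deform_pt (l + 1 + 1) *m D (l + 1) = w (l + 1 + 1) *m D (l + 1).
Proof. by rewrite deform_ptE mulmxDl -scalemxAl deform_dirS_D scaler0 addr0. Qed.

Lemma deform_pt_neq0 l : deform_pt (l + 1) != 0.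
Proof.
move: l; apply: (@int_ind_down (fun l => deform_pt (l + 1) != 0) i).
  move=> l il; have [-> | li] := eqVneq l i.
    have [w2_neq0 _] := lp_w (i + 1 + 1).
    have : t *: w (i + 1 + 1) != 0 by rewrite scaler_eq0 negb_or t_neq0.
    by apply: contra_neq; rewrite -deform_pt_iU => ->; rewrite mul0mx.
  rewrite deform_pt_gt; first by have [] := lp_w (l + 1).
  by rewrite lt_neqAle eq_sym li.
move=> l li W2_neq0; have li' : l != i by rewrite lt_eqF.
have [c0 | c0] := eqVneq (up_coef (l + 1)) 0.
  by rewrite deform_pt_coef0 //; have [] := lp_w (l + 1).
have : up_coef (l + 1) *: deform_pt (l + 1 + 1) != 0 by rewrite scaler_eq0 negb_or c0.
by apply: contra_neq; rewrite -deform_pt_U // => ->; rewrite mul0mx.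
Qed.

Lemma deform_pt_lp : lp_point up down f deform_pt.
Proof.
move=> j; have [l ->] : exists l, j = l + 1 by exists (j - 1); rewrite subrK.
split; first exact: deform_pt_neq0.
split.
  have [-> | li] := eqVneq l i; last by rewrite deform_pt_U // scalemx_sub.
  by rewrite deform_pt_iU deform_pt_gt ?scalemx_sub //; lia.
rewrite deform_pt_D; have [-> | li] := eqVneq l i.
  by case/andP: def_w => _ /eqP->; rewrite sub0mx.
have [c0 | c0] := eqVneq (up_coef (l + 1)) 0; last by rewrite up_coef_neq0 ?sub0mx.
by rewrite deform_pt_coef0 //; have [_ []] := lp_w (l + 1).
Qed.

Lemma deform_pt_defect j : defect deform_pt j -> defect w j /\ j != i + 1.
Proof.
have [l ->] : exists l, j = l + 1 by exists (j - 1); rewrite subrK.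
have [-> | li] := eqVneq l i.
  case/andP; rewrite deform_pt_iU scaler_eq0 (negPf t_neq0) /=.
  by have [/negPf->] := lp_w (i + 1 + 1).
case/andP => /eqP WU0 /eqP WD0.
have c0 : up_coef (l + 1) = 0.
  apply/eqP; move: WU0; rewrite deform_pt_U // => /eqP.
  by rewrite scaler_eq0 (negPf (deform_pt_neq0 (l + 1))) orbF.
split; last by rewrite (inj_eq (addIr 1)).
rewrite deform_pt_coef0 // in WU0; rewrite deform_pt_D in WD0.
by rewrite /defect WU0 WD0 !eqxx.
Qed.

End Line.

Lemma deformation : exists u : fam d K, forall t, t != 0 ->
  lp_point up down f (fun j => w j + t *: u j) /\
  forall j, defect (fun j => w j + t *: u j) j -> defect w j /\ j != i + 1.
Proof.
by exists deform_dir => t t0; split; [apply: deform_pt_lp | apply: deform_pt_defect].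
Qed.

End Deformation.

Lemma upR_zero l (x : 'rV[k]_(d l)) : x *m up l = 0 ->
  forall j, l < j -> upR up x (0 : 'rV_(d j)).
Proof.
move=> x0 j lj; have -> : j = l + 1 + (absz (j - l - 1)%R)%:Z by lia.
elim: (absz _) => [|m IH]; first by rewrite addr0 -x0; apply/upRS/upR0.
by rewrite -addn1 PoszD addrA -(mul0mx _ (up _)); apply: upRS.
Qed.

Lemma downR_zero l (x : 'rV[k]_(d (l + 1))) : x *m down l = 0 ->
  forall j, j <= l -> downR down x (0 : 'rV_(d j)).
Proof.
move=> x0 j jl; have -> : j = l - (absz (l - j)%R)%:Z by lia.
elim: (absz _) => [|m IH]; first by rewrite subr0 -x0; apply/downRS/downR0.
move: IH; rewrite (_ : l - m%:Z = l - m.+1%:Z + 1); last by lia.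
by move=> IH; rewrite -(mul0mx _ (down (l - m.+1%:Z))); apply: downRS.
Qed.

Variables (a : int) (n : nat).
Hypothesis cosupport_v : cosupport up down (inH a n).

Lemma row_free_up l : l < a -> row_free (up l).
Proof.
move=> la; apply: inj_row_free => x x0.
have [j [/andP[aj _] inj_lj]] := cosupport_v l.
by apply: (inj_lj x 0 0); left; apply: upR_zero; rewrite ?mul0mx //; lia.
Qed.

Lemma row_free_down l : a + n%:Z <= l -> row_free (down l).
Proof.
move=> la; apply: inj_row_free => x x0.
have [j [/andP[_ ja] inj_lj]] := cosupport_v (l + 1).
by apply: (inj_lj x 0 0); right; apply: downR_zero; rewrite ?mul0mx //; lia.
Qed.

Lemma row_free_upK l : l < a -> row_free (U l).
Proof. by rewrite row_free_map; apply: row_free_up. Qed.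

Lemma row_free_downK l : a + n%:Z <= l -> row_free (D l).
Proof. by rewrite row_free_map; apply: row_free_down. Qed.

Lemma defect_inH w i : lp_point up down f w -> defect w i -> a <= i < a + n%:Z.
Proof.
move=> lp_w /andP[/eqP wU0 /eqP wD0].
have [w0 _] := lp_w i; have [w1 _] := lp_w (i + 1).
apply/andP; split.
  rewrite leNgt; apply: contraNN w0 => /row_free_upK/row_free_inj inj.
  by apply/eqP/inj; rewrite /= wU0 mul0mx.
rewrite ltNge; apply: contraNN w1 => /row_free_downK/row_free_inj inj.
by apply/eqP/inj; rewrite /= wD0 mul0mx.
Qed.

Lemma zclosed_defect l : a <= l < a + n%:Z ->
  zclosed a n (fun x : fam d K => defect x l).
Proof.
move=> /andP[al la].
apply: zclosed_ext (zclosedI (zclosed_mulmx_eq0 (U l) _) (zclosed_mulmx_eq0 (D l) _)).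
- by move=> x; rewrite /defect; split=> [[-> ->] | /andP[/eqP-> /eqP->]]; rewrite ?eqxx.
- by apply/andP; split; lia.
- by apply/andP; split; lia.
Qed.

Lemma LPstar_open_cosupport : LPstar_open up down f a n.
Proof.
exists (fun w => exists2 m, (m < n)%N & defect w (a + m%:Z)); split.
  by apply: zclosed_bigU => m mn; apply: zclosed_defect; apply/andP; split; lia.
move=> w lp_w; rewrite exact_subE //; split=> [nodef [m _] | nodefH i]; first exact/negP.
apply/negP => di; apply: nodefH; have /andP[ai ia] := defect_inH lp_w di.
by exists (absz (i - a)%R); [lia | rewrite (_ : a + _ = i) //; lia].
Qed.

Definition defects (w : fam d K) : {set 'I_n} := [set m : 'I_n | defect w (a + m%:Z)].

Lemma defects_neq0 w i : lp_point up down f w -> defect w i -> defects w != set0.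
Proof.
move=> lp_w di; have /andP[ai ia] := defect_inH lp_w di.
have mn : (absz (i - a)%R < n)%N by lia.
by apply/set0Pn; exists (Ordinal mn); rewrite inE /= (_ : a + _ = i) //; lia.
Qed.

End Representation.

Lemma LPstar_dense_cosupport (k : fieldType) (d : int -> nat)
  (up : forall i : int, 'M[k]_(d i, d (i + 1)))
  (down : forall i : int, 'M[k]_(d (i + 1), d i)) (a : int) (n : nat)
  (K : closedFieldType) (f : {rmorphism k -> K}) :
  colinked up down -> exact_rep up down -> cosupport up down (inH a n) ->
  LPstar_dense up down f a n.
Proof.
move=> colinked_v exact_v cosupport_v Z Zcl Z_LPstar w.
have [N] := ubnP #|defects up down f a n w|; elim: N w => // N IH w lt_w lp_w.
have [def0 | [m]] := set_0Vmem (defects up down f a n w).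
  apply: Z_LPstar => //; apply/exact_subE => // i; apply/negP.
  by move/(defects_neq0 cosupport_v lp_w); rewrite def0 eqxx.
rewrite inE => dm.
have [|u Hu] := deformation colinked_v exact_v (i := a + m%:Z - 1) lp_w.
  by rewrite subrK.
apply: zclosed_line Zcl _ => t t0; have [lp_t def_t] := Hu t t0.
rewrite subrK in def_t; apply: IH lp_t; rewrite -ltnS; apply: leq_trans _ lt_w.
apply: proper_card; apply/properP; split.
  by apply/subsetP => m'; rewrite !inE => /def_t[].
by exists m; rewrite !inE ?dm //; apply/negP => /def_t[_]; rewrite eqxx.
Qed.

Theorem proposition3p10
  (k : fieldType) (d : int -> nat)
  (up : forall i : int, 'M[k]_(d i, d (i + 1)))
  (down : forall i : int, 'M[k]_(d (i + 1), d i)) :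
  colinked up down -> exact_rep up down ->
  forall (a : int) (n : nat),
    cosupport up down (inH a n) ->
    forall (K : closedFieldType) (f : {rmorphism k -> K}),
      LPstar_open up down f a n /\ LPstar_dense up down f a n.
Proof.
move=> colinked_v exact_v a n cosupport_v K f; split.
  exact: LPstar_open_cosupport.
exact: LPstar_dense_cosupport.
Qed.
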